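(* Let $u$ be a set, $F,G$ conjunctive set transformers on $u$ with $F(u)=u$ and $G(u)=u$, and let $p,q\subseteq u$ satisfy $p\cap\overline{q}\subseteq F(p\cup q)$, $p\cap\overline{q}\subseteq\mathrm{grd}(G)$ and $p\cap\overline{q}\subseteq G(q)$. Then $p\cup q\subseteq X(q)(q)$, where $X(q)$ is the fair iteration defined in the context.
   Context: A set transformer on $u$ is a map $E:\mathbb{P}(u)\to\mathbb{P}(u)$; it is conjunctive if it preserves intersections of nonempty families of subsets (in particular it is monotone). For $a\subseteq u$, $\overline{a}=u\setminus a$; $\mathrm{grd}(E)=\overline{E(\varnothing)}$. The fair iteration $X(q)=\overline{q}\Longrightarrow((F\,;X(q))\mathrel{\triangledown} G)$ (guarded command, sequencing, and dovetail/fair choice) is the set transformer $X(q)(r)={\cal L}(X(q))(r)\cap\mathrm{pre}(X(q))$ where: the liberal part ${\cal L}(X(q))(r)$ is the greatest fixpoint of the monotone map $Y\mapsto q\cup(G(r)\cap F(Y))$ on $\mathbb{P}(u)$, and the termination set $\mathrm{pre}(X(q))$ is the least fixpoint of the monotone map $Y\mapsto q\cup\mathrm{grd}(G)\cup F(Y)$. *)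

(* subsets of the universe u are predicates on a type T
   (u is the whole carrier T), set equality is extensional. *)

Definition pset (T : Type) := T -> Prop.

Definition subset {T} (a b : pset T) : Prop := forall x, a x -> b x.
Definition seteq {T} (a b : pset T) : Prop := forall x, a x <-> b x.
Definition full {T} : pset T := fun _ => True.
Definition empty {T} : pset T := fun _ => False.
Definition union {T} (a b : pset T) : pset T := fun x => a x \/ b x.
Definition inter {T} (a b : pset T) : pset T := fun x => a x /\ b x.
Definition compl {T} (a : pset T) : pset T := fun x => ~ a x.

Definition bigcap {T} (S : pset T -> Prop) : pset T :=
  fun x => forall a, S a -> a x.

Definition transformer (T : Type) := pset T -> pset T.

Definition conjunctive {T} (E : transformer T) : Prop :=
  forall S : pset T -> Prop, (exists a, S a) ->
    seteq (E (bigcap S)) (bigcap (fun b => exists a, S a /\ b = E a)).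

Definition monotone_map {T} (f : pset T -> pset T) : Prop :=
  forall a b, subset a b -> subset (f a) (f b).

Definition lfp {T} (f : pset T -> pset T) : pset T :=
  fun x => forall Y, subset (f Y) Y -> Y x.
Definition gfp {T} (f : pset T -> pset T) : pset T :=
  fun x => exists Y, subset Y (f Y) /\ Y x.

Definition grd {T} (E : transformer T) : pset T := compl (E empty).

Definition liberal_X {T} (F G : transformer T) (q r : pset T) : pset T :=
  gfp (fun Y => union q (inter (G r) (F Y))).

Definition pre_X {T} (F G : transformer T) (q : pset T) : pset T :=
  lfp (fun Y => union (union q (grd G)) (F Y)).

(* fair iteration X(q) = qbar ==> ((F ; X(q)) ▽ G) *)
Definition fair_iter {T} (F G : transformer T) (q : pset T) : transformer T :=
  fun r => inter (liberal_X F G q r) (pre_X F G q).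

From Stdlib Require Import Classical.

Lemma gfp_coind {T} (f : pset T -> pset T) (Y : pset T) :
  subset Y (f Y) -> subset Y (gfp f).
Proof. intros HY x Hx. exists Y. split; assumption. Qed.

Lemma lfp_base {T} (f : pset T -> pset T) (a : pset T) :
  (forall Y, subset a (f Y)) -> subset a (lfp f).
Proof. intros Ha x Hx Y HY. apply HY, Ha, Hx. Qed.

Lemma union_split_compl {T} {p q : pset T} {x : T} :
  union p q x -> q x \/ inter p (compl q) x.
Proof.
  intros Hx. destruct (classic (q x)) as [Hq | Hnq]; [now left |].
  right. destruct Hx as [Hp | Hq]; [split; assumption | contradiction].
Qed.

Theorem lemma2 (T : Type) (F G : transformer T) (p q : pset T) :
  conjunctive F -> conjunctive G ->
  seteq (F full) full -> seteq (G full) full ->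
  subset (inter p (compl q)) (F (union p q)) ->
  subset (inter p (compl q)) (grd G) ->
  subset (inter p (compl q)) (G q) ->
  subset (union p q) (fair_iter F G q q).
Proof.
  intros _ _ _ _ HF Hgrd HG x Hx. split.
  - apply gfp_coind with (Y := union p q); [| exact Hx].
    intros y Hy. destruct (union_split_compl Hy) as [Hq | Hpq].
    + now left.
    + right. split; [apply HG | apply HF]; exact Hpq.
  - apply lfp_base with (a := union p q); [| exact Hx].
    intros Y y Hy. left. destruct (union_split_compl Hy) as [Hq | Hpq].
    + now left.
    + right. apply Hgrd, Hpq.
Qed.
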